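(* Let $G$ be a finite graph, $(X^+,X^-)$ a pair of subsets of $V(G)$, $c\in V(G)$ and $r$ an integer such that $X^+\subseteq B_G(c,r)$ and $X^-\cap B_G(c,r)=\emptyset$. Let $X=X^+\cup X^-$, let $(A_1,A_2)$ be a separation of $G$ with $c\in A_1$ and $X\subseteq A_2$, and let $S=A_1\cap A_2$. Then \[A_2\cap\bigcup_{v\in S}B_G(v,r^+(v))\subseteq A_2\cap B_G(c,r)\subseteq A_2\cap\bigcup_{v\in S}B_G(v,r^-(v)-1).\]
   Context: $\mathrm{dist}_G$ is shortest-path distance ($\infty$ between different components), and $B_G(v,\rho)=\{w\in V(G):\mathrm{dist}_G(v,w)\le\rho\}$ for $\rho\in\mathbb{Z}\cup\{\pm\infty\}$ (balls of negative radius are empty; $\infty-1=\infty$, $r-\infty=-\infty$). A separation of $G$ is a pair $(A_1,A_2)$ with $A_1\cup A_2=V(G)$ and no edge between $A_1\setminus A_2$ and $A_2\setminus A_1$. Conventions: $\min\emptyset=\infty$, $\max\emptyset=-1$. For $v\in V(G)$: $r^+(v)=\max\{\mathrm{dist}_G(v,x):x\in X\cap B_G(v,r-\mathrm{dist}_G(c,v))\}$ and $r^-(v)=\min\{\mathrm{dist}_G(v,x):x\in X^-\}$. *)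

From mathcomp Require Import all_boot all_order all_algebra.
Set Implicit Arguments. Unset Strict Implicit. Unset Printing Implicit Defensive.
Import Order.TTheory GRing.Theory Num.Theory.

Inductive xint := XNInf | XFin of int | XPInf.

Definition xle (a b : xint) : bool :=
  match a, b with
  | XNInf, _ => true
  | _, XPInf => true
  | XFin x, XFin y => (x <= y)%R
  | _, _ => false
  end.

Definition xmax (a b : xint) : xint := if xle a b then b else a.
Definition xmin (a b : xint) : xint := if xle a b then a else b.

Definition xpred (a : xint) : xint :=
  match a with XFin x => XFin (x - 1)%R | _ => a end.

Definition int_sub_dist (r : int) (d : xint) : xint :=
  match d with
  | XFin x => XFin (r - x)%R
  | XPInf => XNInf
  | XNInf => XPInf
  end.

Section Graph.
Variable T : finType.
Variable e : rel T.

Definition simple_graph : Prop := symmetric e /\ irreflexive e.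

Fixpoint walk_k (k : nat) (v w : T) : bool :=
  match k with
  | 0 => v == w
  | k'.+1 => [exists u, e v u && walk_k k' u w]
  end.

(* shortest-path distance: the least k with a walk of length k from v to w
   (such k, if it exists, is < #|T|); +oo if no walk exists. *)
Definition dist (v w : T) : xint :=
  let k := find (fun k => walk_k k v w) (iota 0 #|T|) in
  if k < #|T| then XFin (Posz k) else XPInf.

Definition ball (v : T) (rho : xint) : {set T} :=
  [set w | xle (dist v w) rho].

Definition separation (A1 A2 : {set T}) : Prop :=
  A1 :|: A2 = setT /\
  forall x y, x \in A1 :\: A2 -> y \in A2 :\: A1 -> ~~ e x y.

Definition rplus (X : {set T}) (c : T) (r : int) (v : T) : xint :=
  \big[xmax/XFin (-1)%R]_(x in X :&: ball v (int_sub_dist r (dist c v))) dist v x.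

Definition rminus (Xm : {set T}) (v : T) : xint :=
  \big[xmin/XPInf]_(x in Xm) dist v x.

End Graph.

From mathcomp Require Import all_boot all_order all_algebra.
From mathcomp Require Import zify.
Import Order.TTheory GRing.Theory Num.Theory.
Set Implicit Arguments. Unset Strict Implicit. Unset Printing Implicit Defensive.

(* Both inclusions are triangle inequalities along walks from c.  If w lies
   in B(v, r^+(v)) for any vertex v, witnessed by x with d(v,w) <= d(v,x) <=
   r - d(c,v), then d(c,w) <= d(c,v) + d(v,w) <= r.  Conversely, a geodesic
   from c in A1 to w in A2 meets S at some v with d(c,v) + d(v,w) = d(c,w) <= r;
   every x in X^- has d(c,x) > r, so d(v,x) >= d(c,x) - d(c,v) > d(v,w). *)

Lemma xle_bigmax_ex (I : finType) (P : pred I) (f : I -> xint) x0 a :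
  ~~ xle a x0 -> xle a (\big[xmax/x0]_(i | P i) f i) ->
  exists2 i, P i & xle a (f i).
Proof.
move=> a_x0; apply: (big_ind (fun y => xle a y -> exists2 i, P i & xle a (f i))).
- by move/negP: a_x0.
- by move=> x y IHx IHy; rewrite /xmax; case: ifP.
- by move=> i Pi ai; exists i.
Qed.

Lemma xle_bigmin (I : finType) (P : pred I) (f : I -> xint) x0 a :
  xle a x0 -> (forall i, P i -> xle a (f i)) ->
  xle a (\big[xmin/x0]_(i | P i) f i).
Proof.
by move=> a_x0 a_f; apply: (big_ind (xle a)) => // x y; rewrite /xmin; case: ifP.
Qed.

Lemma xle_xpred (n : int) y : xle (XFin n) (xpred y) = xle (XFin (n + 1)) y.
Proof. by case: y => //= z; apply/idP/idP; lia. Qed.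

Section Walks.
Variable T : finType.
Variable e : rel T.

Lemma walk_kP k a b :
  reflect (exists2 p, size p = k & path e a p && (last a p == b))
          (walk_k e k a b).
Proof.
elim: k a => [|k IH] a /=.
  apply: (iffP eqP) => [<-|[[|//] _ /andP[_ /eqP//]]].
  by exists [::]; rewrite //= eqxx.
apply: (iffP existsP) => [[u /andP[eau /IH[p sp pu]]]|[[//|u p] [sp]]].
  by exists (u :: p); rewrite /= ?sp ?eau.
rewrite /= => /andP[/andP[eau pu] lp].
by exists u; rewrite eau; apply/IH; exists p; rewrite ?pu.
Qed.

Lemma walk_cat k1 k2 a m b :
  walk_k e k1 a m -> walk_k e k2 m b -> walk_k e (k1 + k2) a b.
Proof.
elim: k1 a => [|k IH] a /=; first by move/eqP=> ->.
case/existsP=> u /andP[eau w1] w2.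
by apply/existsP; exists u; rewrite eau (IH u).
Qed.

Lemma walk_shorten k a b : walk_k e k a b ->
  exists2 j, j < #|T| & (j <= k) && walk_k e j a b.
Proof.
case/walk_kP=> p <- /andP[pp /eqP lp].
case: (shortenP pp) lp => q pq uq sub_q lq.
have q_small : size q < #|T| by have := max_card (mem (a :: q)); rewrite (card_uniqP uq).
exists (size q) => //; apply/andP; split.
  by case/andP: uq => _ /uniq_leq_size; apply.
by apply/walk_kP; exists q; rewrite ?pq ?lq ?eqxx.
Qed.

Variant dist_spec (a b : T) : xint -> Type :=
  | DistFin k of walk_k e k a b & (forall j, walk_k e j a b -> k <= j) :
      dist_spec a b (XFin k)
  | DistInf of (forall j, ~~ walk_k e j a b) : dist_spec a b XPInf.

Lemma distP a b : dist_spec a b (dist e a b).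
Proof.
rewrite /dist; set P := fun k => walk_k e k a b.
have find_min j : walk_k e j a b -> find P (iota 0 #|T|) <= j.
  case/walk_shorten=> i i_small /andP[ij wi].
  rewrite (leq_trans _ ij) // leqNgt; apply/negP => /(before_find 0).
  by rewrite nth_iota // add0n /P wi.
case: ifP => found.
  apply: DistFin => //.
  have has_walk : has P (iota 0 #|T|) by rewrite has_find size_iota.
  by have := nth_find 0 has_walk; rewrite nth_iota // add0n.
apply: DistInf => j; apply/negP => /walk_shorten[i i_small /andP[_ wi]].
have : has P (iota 0 #|T|) by apply/hasP; exists i; rewrite ?mem_iota.
by rewrite has_find size_iota found.
Qed.

Lemma walk_dist_le k a b (r : int) :
  walk_k e k a b -> (k%:Z <= r)%R -> xle (dist e a b) (XFin r).
Proof.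
move=> w kr; case: distP => [j _ min_j | /(_ k)]; last by rewrite w.
by have := min_j _ w; rewrite /=; lia.
Qed.

Lemma separation_walk A1 A2 k c w : separation e A1 A2 ->
  walk_k e k c w -> c \in A1 -> w \in A2 ->
  exists v i, [/\ v \in A1 :&: A2, i <= k, walk_k e i c v & walk_k e (k - i) v w].
Proof.
move=> [cover_A no_cross]; elim: k c => [|k IH] c /=.
  by move/eqP=> <- cA1 cA2; exists c, 0; split; rewrite /= ?inE ?cA1 ?cA2.
case/existsP=> u /andP[ecu wu] cA1 wA2.
have [cA2|cA2] := boolP (c \in A2).
  exists c, 0; split; rewrite /= ?inE ?cA1 ?cA2 ?subn0 //.
  by apply/existsP; exists u; rewrite ecu.
have uA1 : u \in A1.
  apply/negPn/negP => uA1.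
  have : u \in A1 :|: A2 by rewrite cover_A inE.
  rewrite inE (negbTE uA1) /= => uA2.
  by have := no_cross c u; rewrite !inE cA1 cA2 uA1 uA2 ecu => /(_ isT isT).
have [v [i [vS ik wi wr]]] := IH u wu uA1 wA2.
by exists v, i.+1; split => //; apply/existsP; exists u; rewrite ecu.
Qed.

Lemma ball_rplus_sub X c r v :
  ball e v (rplus e X c r v) \subset ball e c (XFin r).
Proof.
apply/subsetP => w; rewrite !inE /rplus.
case: (distP v w) => [kw vw _|_]; case/xle_bigmax_ex => // x /setIP[_];
  rewrite inE; case: (distP c v) => [kc cv _|_]; case: (distP v x) => //= kx _ _.
by move=> kx_r kw_kx; apply: walk_dist_le (walk_cat cv vw) _; lia.
Qed.

Lemma ball_sub_rminus A1 A2 (Xm : {set T}) c r w :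
  separation e A1 A2 -> c \in A1 -> [disjoint Xm & ball e c (XFin r)] ->
  w \in A2 -> w \in ball e c (XFin r) ->
  exists2 v, v \in A1 :&: A2 & w \in ball e v (xpred (rminus e Xm v)).
Proof.
move=> sepA cA1 Xm_far wA2; rewrite inE; case: (distP c w) => //= k cw _ k_r.
have [v [i [vS ik cv vw]]] := separation_walk sepA cw cA1 wA2.
exists v => //; rewrite inE.
case: (distP v w) => [d _ min_d | /(_ (k - i))]; last by rewrite vw.
have d_k := min_d _ vw.
rewrite xle_xpred; apply: xle_bigmin => // x xXm.
case: (distP v x) => //= kx vx _.
have := disjointFr Xm_far xXm; rewrite inE; apply: contraFT; rewrite -ltNge => kx_small.
by apply: walk_dist_le (walk_cat cv vx) _; lia.
Qed.

End Walks.

Theorem lemma5p2 (T : finType) (e : rel T) (Xp Xm : {set T}) (c : T) (r : int)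
  (A1 A2 : {set T}) :
  simple_graph e ->
  Xp \subset ball e c (XFin r) ->
  Xm :&: ball e c (XFin r) = set0 ->
  separation e A1 A2 ->
  c \in A1 ->
  Xp :|: Xm \subset A2 ->
  let X := Xp :|: Xm in
  let S := A1 :&: A2 in
  (A2 :&: \bigcup_(v in S) ball e v (rplus e X c r v) \subset A2 :&: ball e c (XFin r))
  /\
  (A2 :&: ball e c (XFin r) \subset
     A2 :&: \bigcup_(v in S) ball e v (xpred (rminus e Xm v))).
Proof.
move=> _ _ /eqP; rewrite setI_eq0 => Xm_far sepA cA1 _ X S; split.
  apply/subsetP => w /setIP[wA2 /bigcupP[v _ wv]].
  by rewrite inE wA2 (subsetP (ball_rplus_sub e X c r v)).
apply/subsetP => w /setIP[wA2 cw]; rewrite inE wA2 /=.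
have [v vS wv] := ball_sub_rminus sepA cA1 Xm_far wA2 cw.
by apply/bigcupP; exists v.
Qed.
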